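(* Let $\Sigma$ be a finite alphabet with at least two symbols, $z\in\{B,A\}$, and $P=\Sigma^{\mathbb{N}}\setminus\mathrm{Ult}$. Then $P$ is a perfect subset of $(\Sigma^{\mathbb{N}},\tau_z)$ (closed, with no isolated points in the subspace topology) and $\mathrm{Ult}$ is countable and open; i.e. $P\cup\mathrm{Ult}$ is the Cantor–Bendixson decomposition of $(\Sigma^{\mathbb{N}},\tau_z)$.
   Context: $\mathrm{Ult}=\{u\cdot v^\omega: u,v\in\Sigma^*, v\neq\emptyset\}$, the ultimately periodic infinite words. A language $L\subseteq\Sigma^{\mathbb{N}}$ is $\omega$-regular if accepted by a Büchi automaton $(\Sigma,Q,Q_i,Q_f,\delta)$ (a run on $\sigma$ is $(q_n)_n$ with $q_0\in Q_i$, $(q_n,\sigma(n),q_{n+1})\in\delta$; accepting iff $q_n\in Q_f$ for infinitely many $n$). $\tau_C$ is the Cantor topology on $\Sigma^{\mathbb{N}}$; $\tau_B$ is generated by the $\omega$-regular languages; $\tau_A$ is generated by the $\tau_C$-closed $\omega$-regular languages. *)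

From mathcomp Require Import all_boot.
Set Implicit Arguments. Unset Strict Implicit. Unset Printing Implicit Defensive.

Definition word (Sigma : Type) := nat -> Sigma.

(* Ultimately periodic words u v^omega, v nonempty. *)
Definition Ult (Sigma : Type) (s : word Sigma) : Prop :=
  exists (u v : seq Sigma), v <> [::] /\
    forall n, s n = if n < size u then nth (s n) u n
                    else nth (s n) v ((n - size u) %% size v).

Record buchi (Sigma : Type) := Buchi {
  bstate : finType;
  binit : {set bstate};
  bfinal : {set bstate};
  bdelta : bstate -> Sigma -> bstate -> bool }.
Arguments bstate {Sigma}. Arguments binit {Sigma}. Arguments bfinal {Sigma}. Arguments bdelta {Sigma}.

Definition buchi_run (Sigma : Type) (A : buchi Sigma) (s : word Sigma)
  (r : nat -> bstate A) : Prop :=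
  r 0 \in binit A /\ forall n, bdelta A (r n) (s n) (r n.+1).

Arguments buchi_run {Sigma}.
Definition buchi_accepts (Sigma : Type) (A : buchi Sigma) (s : word Sigma) : Prop :=
  exists r, buchi_run A s r /\ forall N, exists n, N <= n /\ r n \in bfinal A.

Arguments buchi_accepts {Sigma}.
Definition omega_regular (Sigma : Type) (L : word Sigma -> Prop) : Prop :=
  exists A : buchi Sigma, forall s, L s <-> buchi_accepts A s.

Definition cantor_open (Sigma : Type) (U : word Sigma -> Prop) : Prop :=
  forall s, U s -> exists n, forall t : word Sigma,
    (forall i, i < n -> t i = s i) -> U t.

Definition cantor_closed (Sigma : Type) (C : word Sigma -> Prop) : Prop :=
  cantor_open (fun s => ~ C s).

Inductive gen_open (X : Type) (F : (X -> Prop) -> Prop) : (X -> Prop) -> Prop :=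
| go_base U : F U -> gen_open F U
| go_full : gen_open F (fun _ => True)
| go_inter U V : gen_open F U -> gen_open F V -> gen_open F (fun x => U x /\ V x)
| go_union (S : (X -> Prop) -> Prop) :
    (forall U, S U -> gen_open F U) -> gen_open F (fun x => exists U, S U /\ U x)
| go_ext U V : gen_open F U -> (forall x, U x <-> V x) -> gen_open F V.

Inductive topo_choice := zB | zA.

Definition tau_open (Sigma : Type) (z : topo_choice) : (word Sigma -> Prop) -> Prop :=
  match z with
  | zB => gen_open (fun L => omega_regular L)
  | zA => gen_open (fun L => omega_regular L /\ cantor_closed L)
  end.

Definition tau_closed (Sigma : Type) (z : topo_choice) (C : word Sigma -> Prop) : Prop :=
  tau_open z (fun s => ~ C s).

Definition no_isolated_points (Sigma : Type) (z : topo_choice) (C : word Sigma -> Prop) : Prop :=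
  forall s, C s -> forall U, tau_open z U -> U s -> exists t, C t /\ U t /\ t <> s.

Definition perfect_in (Sigma : Type) (z : topo_choice) (C : word Sigma -> Prop) : Prop :=
  tau_closed z C /\ no_isolated_points z C.

Definition countable_set (X : Type) (C : X -> Prop) : Prop :=
  exists f : nat -> X, forall x, C x -> exists n, f n = x.

(* Every ultimately periodic word s is recognised, as a singleton, by a
   "lasso" Buchi automaton whose states are the positions of s up to the end
   of its first period; singletons are also Cantor-closed, so Ult is a union of
   basic open sets in both topologies, and it is countable because it is
   parametrised by pairs of finite words.
   Conversely, every open set U of tau_B (hence of tau_A) is pumpable: for
   s in U there is a finite colouring of the positions of s such that deleting
   the factor between two equally coloured positions stays in U (for a
   language accepted by a Buchi automaton, colour by the state of an accepting
   run; the property is preserved by the generating operations).  Deleting a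
   nonempty factor from a word that is not ultimately periodic yields a
   different word that is still not ultimately periodic, so no point of the
   complement of Ult is isolated. *)

From mathcomp Require Import all_boot.
From mathcomp Require Import zify.
From Stdlib Require Import Classical FunctionalExtensionality.
Set Implicit Arguments. Unset Strict Implicit. Unset Printing Implicit Defensive.

Section Periodicity.
Variable T : Type.
Implicit Types (s : nat -> T) (N p : nat).

Definition periodic_from s N p := 0 < p /\ forall n, N <= n -> s (n + p) = s n.

Lemma periodic_fromMn s N p : periodic_from s N p ->
  forall k n, N <= n -> s (n + k * p) = s n.
Proof.
case=> _ sP; elim=> [|k IHk] n leNn; first by rewrite mul0n addn0.
by rewrite mulSn addnA addnAC sP ?IHk //; lia.
Qed.

Lemma Ult_periodic_from (s : word T) : Ult s -> exists N p, periodic_from s N p.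
Proof.
case=> u [v [v_neq0 sE]].
have v_gt0 : 0 < size v by case: v v_neq0 {sE}.
exists (size u), (size v); split=> // n le_un.
rewrite (sE (n + size v)) (sE n) ltnNge (leq_trans le_un (leq_addr _ _)) ltnNge le_un /=.
rewrite -addnBAC // modnDr; exact/set_nth_default/ltn_pmod.
Qed.

Lemma periodic_from_Ult (s : word T) N p : periodic_from s N p -> Ult s.
Proof.
move=> sP; have p_gt0 := sP.1.
exists (mkseq s N), (mkseq (fun k => s (N + k)) p); split.
  by move/(congr1 size); rewrite size_mkseq /=; lia.
move=> n; rewrite !size_mkseq; case: ltnP => leNn; first by rewrite nth_mkseq.
rewrite nth_mkseq ?ltn_pmod //.
have nE : N + (n - N) %% p + (n - N) %/ p * p = n.
  by move: (divn_eq (n - N) p); lia.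
by rewrite -{1}nE (periodic_fromMn sP) // leq_addr.
Qed.

Definition drop_factor s i j n := if n < i then s n else s (n + (j - i)).

Lemma drop_factor_not_Ult (s : word T) i j :
  ~ Ult s -> ~ Ult (drop_factor s i j).
Proof.
move=> sNU /Ult_periodic_from [N [p [p_gt0 dP]]]; apply: sNU.
apply: (@periodic_from_Ult _ (N + i + j) p); split=> // n le_n.
have := dP (n - (j - i)) ltac:(lia); rewrite /drop_factor.
rewrite !ifN -?leqNgt; try lia.
have -> : n - (j - i) + p + (j - i) = n + p by lia.
by rewrite subnK //; lia.
Qed.

Lemma drop_factor_neq (s : word T) i j :
  i < j -> ~ Ult s -> drop_factor s i j <> s.
Proof.
move=> lt_ij sNU dE; apply: sNU; apply: (@periodic_from_Ult _ i (j - i)).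
split=> [|n le_in]; first lia.
by have := congr1 (fun f => f n) dE; rewrite /drop_factor ltnNge le_in.
Qed.

End Periodicity.

Definition lasso_next N p q := if q.+1 < N + p then q.+1 else N.

(* The lasso 0 -> 1 -> ... -> N + p - 1 -> N tracks, for a word periodic from
   N with period p, a position carrying the same letter as the real one. *)
Lemma lasso_position (T : Type) (s : nat -> T) N p (q : nat -> nat) :
  periodic_from s N p -> q 0 = 0 -> (forall n, q n.+1 = lasso_next N p (q n)) ->
  forall n, q n < N + p /\ s (q n) = s n.
Proof.
move=> sP q0 qS; have p_gt0 := sP.1.
have qE n : q n < N + p /\ exists k, n = q n + k * p /\ (0 < k -> N <= q n).
  elim: n => [|n [lt_q [k [nE le_N]]]]; first by rewrite q0; split; [lia | exists 0].
  rewrite qS /lasso_next; case: ifP => lt_qS; first by split=> //; exists k; lia.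
  by split; [lia | exists k.+1; rewrite mulSn; lia].
move=> n; have [lt_q [[|k] [nE le_N]]] := qE n; split=> //.
  by rewrite {2}nE mul0n addn0.
by rewrite {2}nE (periodic_fromMn sP) // le_N.
Qed.

Definition lasso_buchi (Sigma : eqType) (s : word Sigma) N p : buchi Sigma :=
  @Buchi Sigma 'I_(N + p) [set i : 'I_(N + p) | val i == 0] setT
    (fun i a j => (a == s i) && (val j == lasso_next N p i)).

Lemma lasso_buchi_acceptsE (Sigma : eqType) (s : word Sigma) N p :
  periodic_from s N p -> forall t, buchi_accepts (lasso_buchi s N p) t <-> t = s.
Proof.
move=> sP t; split=> [[r [[r0 rS] _]] | ->].
  have rS' n : val (r n.+1) = lasso_next N p (r n) by case/andP: (rS n) => _ /eqP.
  have rP := lasso_position sP (q := fun n => val (r n)).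
  apply: functional_extensionality => n; case/andP: (rS n) => /eqP -> _.
  by apply: (rP _ rS' n).2; move: r0; rewrite inE => /eqP.
have qP := lasso_position sP (q := fun n => iter n (lasso_next N p) 0) erefl (fun=> erefl).
exists (fun n => Ordinal (qP n).1); split; last by move=> M; exists M; rewrite in_setT.
by split=> [|n]; rewrite ?inE //= (qP n).2 !eqxx.
Qed.

Lemma omega_regular_Ult_singleton (Sigma : eqType) (s : word Sigma) :
  Ult s -> omega_regular (fun t => t = s).
Proof.
case/Ult_periodic_from=> N [p sP].
by exists (lasso_buchi s N p) => t; rewrite lasso_buchi_acceptsE.
Qed.

Lemma cantor_closed_singleton (Sigma : Type) (s : word Sigma) :
  cantor_closed (fun t => t = s).
Proof.
move=> t ts; have [i tsi] : exists i, t i <> s i.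
  by apply: not_all_ex_not => tsE; apply/ts/functional_extensionality.
by exists i.+1 => t' t't t's; apply: tsi; rewrite -(t't i) // t's.
Qed.

Lemma gen_open_Ult (Sigma : Type) (F : (word Sigma -> Prop) -> Prop) :
  (forall s, Ult s -> F (fun t => t = s)) -> gen_open F (@Ult Sigma).
Proof.
move=> F_single.
apply: (go_ext (go_union (S := fun U => exists s, Ult s /\ U = (fun t => t = s)) _)).
  by move=> _ [s [sU ->]]; apply/go_base/F_single.
move=> t; split=> [[_ [[s [sU ->]] ->]] // | tU].
by exists (fun t' => t' = t); split=> //; exists t.
Qed.

Lemma tau_open_Ult (Sigma : eqType) z : tau_open z (@Ult Sigma).
Proof.
case: z; apply: gen_open_Ult => s sU; first exact: omega_regular_Ult_singleton.
by split; [apply: omega_regular_Ult_singleton | apply: cantor_closed_singleton].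
Qed.

Lemma Ult_countable (Sigma : countType) (x0 : Sigma) : countable_set (@Ult Sigma).
Proof.
pose lasso (uv : seq Sigma * seq Sigma) k :=
  if k < size uv.1 then nth x0 uv.1 k else nth x0 uv.2 ((k - size uv.1) %% size uv.2).
exists (fun n => if unpickle n is Some uv then lasso uv else fun=> x0).
move=> s [u [v [v_neq0 sE]]]; exists (pickle (u, v)); rewrite pickleK.
apply: functional_extensionality => k; rewrite /lasso /= (sE k).
case: ltnP => lt_k; apply: set_nth_default => //.
by rewrite ltn_pmod //; case: v v_neq0 {sE}.
Qed.

Definition pumpable (Sigma : Type) (U : word Sigma -> Prop) :=
  forall s, U s -> exists (C : finType) (c : nat -> C),
    forall i j, i < j -> c i = c j -> U (drop_factor s i j).

(* Colour each position by the state of an accepting run: the run can skip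
   the loop between two positions carrying the same state. *)
Lemma buchi_accepts_pumpable (Sigma : Type) (A : buchi Sigma) :
  pumpable (buchi_accepts A).
Proof.
move=> s [r [[r0 rS] r_final]]; exists (bstate A), r => i j lt_ij rij.
exists (fun n => if n <= i then r n else r (n + (j - i))); split; [split|].
- by rewrite leq0n.
- move=> n; rewrite /drop_factor; case: (ltngtP n i) => [lt_ni|lt_in|->].
  + exact: rS.
  + by rewrite addSn; apply: rS.
  + by rewrite addSn (subnKC (ltnW lt_ij)) rij; apply: rS.
- move=> M; have [m [le_m fin_m]] := r_final (M + j).+1.
  exists (m - (j - i)); split; first lia.
  by rewrite ifN -?ltnNge ?subnK //; lia.
Qed.

Lemma gen_open_pumpable (Sigma : Type) (F : (word Sigma -> Prop) -> Prop) :
  (forall L, F L -> omega_regular L) -> forall U, gen_open F U -> pumpable U.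
Proof.
move=> F_reg U; elim=> {U}.
- move=> U /F_reg [A AE] s /AE sA.
  have [C [c cP]] := buchi_accepts_pumpable sA.
  by exists C, c => i j lt_ij cij; apply/AE/cP.
- by move=> s _; exists unit, (fun=> tt).
- move=> U V _ IHU _ IHV s [sU sV].
  have [C1 [c1 c1P]] := IHU s sU; have [C2 [c2 c2P]] := IHV s sV.
  exists (C1 * C2)%type, (fun n => (c1 n, c2 n)) => i j lt_ij [c1ij c2ij].
  by split; [apply: c1P | apply: c2P].
- move=> S _ IHS s [U [SU sU]]; have [C [c cP]] := IHS U SU s sU.
  by exists C, c => i j lt_ij cij; exists U; split=> //; apply: cP.
- move=> U V _ IHU UV s /UV sV; have [C [c cP]] := IHU s sV.
  by exists C, c => i j lt_ij cij; apply/UV/cP.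
Qed.

Lemma tau_open_pumpable (Sigma : Type) z (U : word Sigma -> Prop) :
  tau_open z U -> pumpable U.
Proof. by case: z; apply: gen_open_pumpable => // L []. Qed.

Lemma finite_coloring_repeats (C : finType) (c : nat -> C) :
  exists i j, i < j /\ c i = c j.
Proof.
apply: NNPP => noRep.
suff c_inj : injective (fun x : 'I_#|C|.+1 => c x).
  by have := leq_card _ c_inj; rewrite card_ord ltnn.
move=> x y cxy; apply: val_inj.
by case: (ltngtP x y) => // lt; case: noRep; [exists x, y | exists y, x].
Qed.

Lemma no_isolated_points_not_Ult (Sigma : Type) z :
  no_isolated_points z (fun s : word Sigma => ~ Ult s).
Proof.
move=> s sNU U /tau_open_pumpable U_pump sU; have [C [c cP]] := U_pump s sU.
have [i [j [lt_ij cij]]] := finite_coloring_repeats c.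
exists (drop_factor s i j); split; first exact: drop_factor_not_Ult.
by split; [apply: cP | apply: drop_factor_neq].
Qed.

Theorem mainTheorem15 (Sigma : finType) (hS : 1 < #|Sigma|) (z : topo_choice) :
  perfect_in z (fun s : word Sigma => ~ Ult s)
  /\ countable_set (@Ult Sigma)
  /\ tau_open z (@Ult Sigma).
Proof.
have UltO := tau_open_Ult Sigma z.
have [x0 _] := card_gt0P (ltnW hS).
split; [split|split].
- by case: z UltO => UltO; apply: (go_ext UltO) => s; split=> [sU /(_ sU) | /NNPP].
- exact: no_isolated_points_not_Ult.
- exact: Ult_countable.
- exact: UltO.
Qed.
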